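(* Let $n\ge 2$. Among all pairs $T_1,T_2$ of rooted trees on leaf set $[n]$, the pairs for which the cone $K_{T_1}+K_{T_2}$ has maximal dimension are exactly those for which $T_1$ and $T_2$ are both binary and have no nontrivial common clade, i.e. $\mathrm{clade}(T_1)\cap\mathrm{clade}(T_2)=\{[n]\}$.
   Context: A rooted tree on leaf set $[n]$ has leaves labeled bijectively by $[n]$ and internal vertices each with at least two children; it is binary if every internal vertex has exactly two children. A clade of $T$ is the set of leaves below an internal vertex; $\mathrm{clade}(T)$ is the set of clades, and $[n]$ is the trivial clade. An ultrametric is $\delta\in\mathbb{R}^{\binom{[n]}{2}}$ with $\delta_{uv}\le\max\{\delta_{uw},\delta_{vw}\}$ for all distinct $u,v,w$. $K_T$ is the set of $\delta$ such that there are real weights on the internal vertices of $T$, weakly increasing along every path toward the root, with $\delta_{uv}$ equal to the weight of the most recent common ancestor of $u$ and $v$; $K_{T_1}+K_{T_2}$ is the Minkowski sum. *)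

From HB Require Import structures.
From mathcomp Require Import all_boot all_order all_algebra.
From mathcomp Require Import boolp reals.
Set Implicit Arguments. Unset Strict Implicit. Unset Printing Implicit Defensive.
Import Order.TTheory GRing.Theory Num.Theory.
Local Open Scope ring_scope.

(* A rooted tree on leaf set [n] = 'I_n is encoded by its set of clades
   (leaf sets below internal vertices).  Vertices of the tree correspond to
   clades (internal vertices) and singletons (leaves). *)
Definition nodes (n : nat) (H : {set {set 'I_n}}) : {set {set 'I_n}} :=
  H :|: [set [set x] | x : 'I_n].

Definition children (n : nat) (H : {set {set 'I_n}}) (C : {set 'I_n})
  : {set {set 'I_n}} :=
  [set D in nodes H | (D \proper C) &&
     [forall E in nodes H, ~~ ((D \proper E) && (E \proper C))]].

Definition is_tree (n : nat) (H : {set {set 'I_n}}) : bool :=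
  [&& [set: 'I_n] \in H,
      [forall C in H, 2 <= #|C|]%N,
      [forall C in H, forall D in H,
          [|| C \subset D, D \subset C | [disjoint C & D]]] &
      [forall C in H, 2 <= #|children H C|]%N].

Definition binary (n : nat) (H : {set {set 'I_n}}) : bool :=
  [forall C in H, #|children H C| == 2]%N.

(* index set of binom(n,2): unordered pairs {u,v}, represented with u < v *)
Definition upair (n : nat) := {p : 'I_n * 'I_n | (p.1 < p.2)%N}.

Definition amb (R : realType) (n : nat) := 'rV[R]_#|{: upair n}|.

Definition dcoord (R : realType) (n : nat) (d : amb R n) (p : upair n) : R :=
  d ord0 (enum_rank p).

Definition lca (n : nat) (H : {set {set 'I_n}}) (u v : 'I_n) (C : {set 'I_n})
  : bool :=
  [&& C \in H, u \in C, v \in C &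
      [forall D in H, ((u \in D) && (v \in D)) ==> (C \subset D)]].

Arguments dcoord {R n}.
Definition K (R : realType) (n : nat) (H : {set {set 'I_n}}) (d : amb R n)
  : Prop :=
  exists w : {set 'I_n} -> R,
    (forall C D, C \in H -> D \in H -> C \proper D -> w C <= w D) /\
    (forall (p : upair n) C, lca H (val p).1 (val p).2 C -> dcoord d p = w C).

Definition msum (V : zmodType) (A B : V -> Prop) : V -> Prop :=
  fun x => exists a b, [/\ A a, B b & x = a + b].

(* dimension of (the linear span of) a set S in R^N: the maximal size of a
   linearly independent family of elements of S (at most N) *)
Definition setdim (R : realType) (N : nat) (S : 'rV[R]_N -> Prop) : nat :=
  (\max_(k < N.+1 | `[< exists s : seq 'rV[R]_N,
        [/\ size s = val k, forall x, x \in s -> S x & free s] >]) val k)%N.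
Arguments K R {n} H d.
Arguments setdim {R N} S.

From HB Require Import structures.
From mathcomp Require Import all_boot all_order all_algebra.
From mathcomp Require Import boolp reals.
From mathcomp Require Import zify.
Set Implicit Arguments. Unset Strict Implicit. Unset Printing Implicit Defensive.
Import Order.TTheory GRing.Theory Num.Theory.

(* Write e_C for the indicator vector of the pairs {u, v} contained in C.  For a
   tree T, every -e_C with C a clade lies in K_T, and every point of K_T with
   weights w is the combination of the vectors e_C - sum_D e_D (D ranging over
   the child clades of C) with coefficients w_C.  Hence dim (K_T1 + K_T2) is the
   rank of the e_C for C in clade(T1) :|: clade(T2).  These are independent:
   inside any clade X there is a pair u, v lying in different children of the
   smallest clade containing X in either tree, so every clade of T1 or T2
   containing u and v contains X.  The dimension is therefore
   |clade(T1) :|: clade(T2)|.  Counting children, |clade(T)| <= n - 1 with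
   equality iff T is binary; as [n] is always a common clade the dimension is at
   most 2n - 3, with equality exactly when both trees are binary and [n] is their
   only common clade.  Two caterpillars with reversed leaf orders attain it. *)

Lemma exists_separated (T : Type) (X : pred T) (r1 r2 : rel T) u :
  symmetric r1 -> symmetric r2 -> transitive r1 -> transitive r2 ->
  (exists2 v, X v & ~~ r1 u v) -> (exists2 w, X w & ~~ r2 u w) -> X u ->
  exists u v, [/\ X u, X v, ~~ r1 u v & ~~ r2 u v].
Proof.
move=> sym1 sym2 tr1 tr2 [v Xv r1uv] [w Xw r2uw] Xu.
have [r2uv|] := boolP (r2 u v); last by exists u, v.
have [r1uw|] := boolP (r1 u w); last by exists u, w.
exists v, w; split=> //.
  by apply: contra r1uv => r1vw; rewrite (tr1 w) // sym1.
by apply: contra r2uw; apply: tr2.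
Qed.

Section Trees.
Variable n : nat.
Implicit Types (H : {set {set 'I_n}}) (A B C D E X Y : {set 'I_n}).

Lemma tree_setT H : is_tree H -> [set: 'I_n] \in H.
Proof. by case/and4P. Qed.

Lemma tree_card H C : is_tree H -> C \in H -> 2 <= #|C|.
Proof. by case/and4P=> _ /forall_inP cardH _ _ /cardH. Qed.

Lemma tree_laminar H C D : is_tree H -> C \in H -> D \in H ->
  [|| C \subset D, D \subset C | [disjoint C & D]].
Proof. by case/and4P=> _ _ /forall_inP lamH _ /lamH /forall_inP lamC /lamC. Qed.

Lemma in_nodes H D : (D \in nodes H) = (D \in H) || [exists x, D == [set x]].
Proof.
by rewrite inE; congr (_ || _); apply/imsetP/existsP => -[x]; [move=> _ ->|move/eqP->];
  exists x.
Qed.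

Lemma clade_nodes H C : C \in H -> C \in nodes H.
Proof. by rewrite in_nodes => ->. Qed.

Lemma set1_nodes H x : [set x] \in nodes H.
Proof. by rewrite in_nodes; apply/orP; right; apply/existsP; exists x. Qed.

Lemma nodes_clade H D : D \in nodes H -> 2 <= #|D| -> D \in H.
Proof. by rewrite in_nodes => /orP[//|/existsP[x /eqP ->]]; rewrite cards1. Qed.

Lemma nodes_n0 H D : is_tree H -> D \in nodes H -> exists x, x \in D.
Proof.
move=> tH; rewrite in_nodes => /orP[DH|/existsP[x /eqP ->]]; last by exists x; rewrite set11.
by apply/card_gt0P; apply: leq_trans (tree_card tH DH).
Qed.

Lemma nodes_laminar H A B x : is_tree H -> A \in nodes H -> B \in nodes H ->
  x \in A -> x \in B -> (A \subset B) || (B \subset A).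
Proof.
move=> tH; rewrite !in_nodes => /orP[AH|/existsP[y /eqP ->]]; last first.
  by move=> _ /set1P -> xB; rewrite sub1set xB.
move=> /orP[BH|/existsP[y /eqP ->]]; last by move=> xA /set1P <-; rewrite sub1set xA orbT.
move=> xA xB; case/or3P: (tree_laminar tH AH BH) => [->|->|AB] //; first by rewrite orbT.
by rewrite (disjointFr AB xA) in xB.
Qed.

Lemma childrenP H C D :
  reflect [/\ D \in nodes H, D \proper C &
               forall E, E \in nodes H -> ~ (D \proper E /\ E \proper C)]
          (D \in children H C).
Proof.
rewrite [_ \in children _ _]inE; apply: (iffP and3P) => [[DN DC /forall_inP maxD]|[DN DC maxD]].
  by split=> // E /maxD /negP maxE [DE EC]; apply: maxE; rewrite DE.
by split=> //; apply/forall_inP => E /maxD maxE; apply/negP => /andP[DE EC]; exact: maxE.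
Qed.

Lemma children_proper H C D : D \in children H C -> D \proper C.
Proof. by case/childrenP. Qed.

Lemma children_nodes H C D : D \in children H C -> D \in nodes H.
Proof. by case/childrenP. Qed.

Lemma child_exists H C Y : Y \in nodes H -> Y \proper C ->
  exists2 D, D \in children H C & Y \subset D.
Proof.
move=> YN YC; pose Q := [set D in nodes H | (Y \subset D) && (D \proper C)].
have YQ : Y \in Q by rewrite inE YN subxx YC.
have [D] := @arg_maxnP _ Y (mem Q) (fun D => #|D|) YQ.
rewrite /= inE => /and3P[DN YD DC] maxD; exists D => //.
apply/childrenP; split=> // E EN [DE EC].
have EQ : E \in Q by rewrite inE EN EC (subset_trans YD (proper_sub DE)).
by have := maxD E EQ; rewrite leqNgt proper_card.
Qed.

Lemma child_uniq H C D1 D2 x : is_tree H -> D1 \in children H C ->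
  D2 \in children H C -> x \in D1 -> x \in D2 -> D1 = D2.
Proof.
move=> tH /childrenP[N1 P1 max1] /childrenP[N2 P2 max2] x1 x2.
apply/eqP; apply: contraT => D12.
case/orP: (nodes_laminar tH N1 N2 x1 x2) => sub.
  by case: (max1 D2 N2); rewrite properEneq D12 sub.
by case: (max2 D1 N1); rewrite properEneq eq_sym D12 sub.
Qed.

Lemma card_children_ge2 H C : 2 <= #|C| -> 2 <= #|children H C|.
Proof.
move=> C2; have [x xC] : exists x, x \in C by apply/card_gt0P; apply: leq_trans C2.
have set1_proper y : y \in C -> [set y] \proper C.
  by move=> yC; rewrite properEcard sub1set yC cards1.
have [D DC _] := child_exists (set1_nodes H x) (set1_proper x xC).
have [_ [y yC yD]] := properP (children_proper DC).
have [D' D'C] := child_exists (set1_nodes H y) (set1_proper y yC).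
rewrite sub1set => yD'; have DD' : D != D' by apply: contraNneq yD => ->.
have sub : [set D; D'] \subset children H C by apply/subsetP => E /set2P[]->.
by apply: leq_trans (subset_leq_card sub); rewrite cards2 DD'.
Qed.

Lemma laminar_tree H : [set: 'I_n] \in H ->
  (forall C, C \in H -> 2 <= #|C|) ->
  (forall C D, C \in H -> D \in H -> (C \subset D) || (D \subset C)) -> is_tree H.
Proof.
move=> HT H2 lamH; apply/and4P; split=> //; apply/forall_inP => C CH.
- exact: H2.
- by apply/forall_inP => D DH; case/orP: (lamH C D CH DH) => ->; rewrite ?orbT.
- exact: card_children_ge2 (H2 C CH).
Qed.

Definition same_child H C u v :=
  [exists D in children H C, (u \in D) && (v \in D)].

Lemma same_child_refl H C u : 2 <= #|C| -> u \in C -> same_child H C u u.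
Proof.
move=> C2 uC; have uC' : [set u] \proper C by rewrite properEcard sub1set uC cards1.
have [D DC] := child_exists (set1_nodes H u) uC'.
by rewrite sub1set => uD; apply/exists_inP; exists D; rewrite ?uD.
Qed.

Lemma same_child_sym H C : symmetric (same_child H C).
Proof.
by move=> u v; apply/exists_inP/exists_inP => -[D DC /andP[uD vD]]; exists D; rewrite ?uD ?vD.
Qed.

Lemma same_child_trans H C : is_tree H -> transitive (same_child H C).
Proof.
move=> tH v u w /exists_inP[D1 D1C /andP[uD1 vD1]] /exists_inP[D2 D2C /andP[vD2 wD2]].
rewrite -(child_uniq tH D2C D1C vD2 vD1) in uD1.
by apply/exists_inP; exists D2; rewrite ?uD1.
Qed.

Lemma min_clade_exists H X : is_tree H -> X != set0 ->
  exists D, [/\ D \in H, X \subset D & forall E, E \in H -> X \subset E -> D \subset E].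
Proof.
move=> tH /set0Pn[x xX]; pose Q := [set E in H | X \subset E].
have TQ : [set: 'I_n] \in Q by rewrite inE tree_setT ?subsetT.
have [D] := @arg_minnP _ _ (mem Q) (fun D => #|D|) TQ.
rewrite /= inE => /andP[DH XD] minD; exists D; split=> // E EH XE.
have xD := subsetP XD x xX; have xE := subsetP XE x xX.
case/orP: (nodes_laminar tH (clade_nodes DH) (clade_nodes EH) xD xE) => // ED.
have := minD E; rewrite /= inE EH XE => /(_ isT) DE.
by have /eqP <- : E == D by rewrite eqEcard ED DE.
Qed.

Lemma lca_exists H u v : is_tree H -> exists C, lca H u v C.
Proof.
move=> tH; have uv0 : [set u; v] != set0 by apply/set0Pn; exists u; rewrite set21.
have [C [CH uvC minC]] := min_clade_exists tH uv0.
have uC : u \in C by rewrite (subsetP uvC) ?set21.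
have vC : v \in C by rewrite (subsetP uvC) ?set22.
apply: (ex_intro _ C); apply/and4P; split=> //.
apply/forall_inP => D DH; apply/implyP => /andP[uD vD]; apply: minC => //.
by apply/subsetP => x /set2P[]->.
Qed.

Lemma exists_not_same_child H X D u : is_tree H -> 2 <= #|X| -> D \in H ->
  X \subset D -> (forall E, E \in H -> X \subset E -> D \subset E) -> u \in X ->
  exists2 v, v \in X & ~~ same_child H D u v.
Proof.
move=> tH X2 DH XD minD uX; apply/exists_inP; apply: contraT.
rewrite negb_exists_in => /forall_inP /= sameX.
have [Du DuD /andP[uDu _]] := exists_inP (negbNE (sameX u uX)).
have XDu : X \subset Du.
  apply/subsetP => v vX; have [Dv DvD /andP[uDv vDv]] := exists_inP (negbNE (sameX v vX)).
  by rewrite (child_uniq tH DuD DvD uDu uDv).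
have DuH : Du \in H.
  exact: nodes_clade (children_nodes DuD) (leq_trans X2 (subset_leq_card XDu)).
by move: (children_proper DuD); rewrite properE (minD Du DuH XDu) andbF.
Qed.

Lemma not_same_child_sub H D Y u v : is_tree H -> D \in H -> Y \in H ->
  u \in D -> u \in Y -> v \in Y -> ~~ same_child H D u v -> D \subset Y.
Proof.
move=> tH DH YH uD uY vY; apply: contraNT => DY.
have YD : Y \proper D.
  case/orP: (nodes_laminar tH (clade_nodes YH) (clade_nodes DH) uY uD) => [YD|DY'].
    by rewrite properE YD.
  by rewrite DY' in DY.
have [E ED YE] := child_exists (clade_nodes YH) YD.
by apply/exists_inP; exists E; rewrite ?(subsetP YE).
Qed.

Lemma separating_pair H1 H2 X : is_tree H1 -> is_tree H2 -> 2 <= #|X| ->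
  exists u v, [/\ u \in X, v \in X, u != v &
    forall Y, Y \in H1 :|: H2 -> u \in Y -> v \in Y -> X \subset Y].
Proof.
move=> t1 t2 X2; have X0 : X != set0 by rewrite -card_gt0 (leq_trans _ X2).
have [u0 u0X] := set0Pn _ X0.
have [D1 [D1H XD1 min1]] := min_clade_exists t1 X0.
have [D2 [D2H XD2 min2]] := min_clade_exists t2 X0.
have [u [v [uX vX n1 n2]]] := exists_separated (same_child_sym H1 D1) (same_child_sym H2 D2)
  (same_child_trans (C:=D1) t1) (same_child_trans (C:=D2) t2)
  (exists_not_same_child t1 X2 D1H XD1 min1 u0X)
  (exists_not_same_child t2 X2 D2H XD2 min2 u0X) u0X.
have uD1 := subsetP XD1 u uX; have uD2 := subsetP XD2 u uX.
exists u, v; split=> //.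
  by apply: contra n1 => /eqP <-; apply: same_child_refl (tree_card t1 D1H) uD1.
move=> Y; rewrite inE => /orP[YH|YH] uY vY.
  exact: subset_trans XD1 (not_same_child_sub t1 D1H YH uD1 uY vY n1).
exact: subset_trans XD2 (not_same_child_sub t2 D2H YH uD2 uY vY n2).
Qed.
End Trees.

Lemma sum_nat_mem (T : finType) (A : {pred T}) (P : pred T) :
  \sum_(x in A) P x = #|[pred x in A | P x]|.
Proof.
by rewrite -sum1_card big_mkcondr; apply: eq_bigr => x _; case: (P x).
Qed.

Section Counting.
Variable n : nat.
Implicit Types (H : {set {set 'I_n}}) (C D E P : {set 'I_n}).

Lemma parent_exists H D : is_tree H -> D \in nodes H -> D != setT ->
  exists2 P, P \in H & D \in children H P.
Proof.
move=> tH DN DT; pose Q := [set E in H | D \proper E].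
have TQ : [set: 'I_n] \in Q by rewrite inE tree_setT // properT.
have [P] := @arg_minnP _ _ (mem Q) (fun E => #|E|) TQ.
rewrite /= inE => /andP[PH DP] minP; exists P => //.
apply/childrenP; split=> // E EN [DE EP].
have [x xD] := nodes_n0 tH DN.
have D0 : 0 < #|D| by apply/card_gt0P; exists x.
have EQ : E \in Q by rewrite inE DE (nodes_clade EN (leq_ltn_trans D0 (proper_card DE))).
by have := minP E EQ; rewrite leqNgt proper_card.
Qed.

Lemma parent_uniq H D P P' : is_tree H -> P \in H -> P' \in H ->
  D \in children H P -> D \in children H P' -> P = P'.
Proof.
move=> tH PH P'H DP DP'; have [x xD] := nodes_n0 tH (children_nodes DP).
have xP := subsetP (proper_sub (children_proper DP)) x xD.
have xP' := subsetP (proper_sub (children_proper DP')) x xD.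
case/childrenP: DP => _ DP maxP; case/childrenP: DP' => _ DP' maxP'.
apply/eqP; apply: contraT => PP'.
case/orP: (nodes_laminar tH (clade_nodes PH) (clade_nodes P'H) xP xP') => sub.
  by case: (maxP' P (clade_nodes PH)); rewrite [P \proper _]properEneq PP' sub.
by case: (maxP P' (clade_nodes P'H)); rewrite [P' \proper _]properEneq eq_sym PP' sub.
Qed.

Lemma sum_parents H D : is_tree H -> D \in nodes H ->
  \sum_(C in H) (D \in children H C) = (D != setT).
Proof.
move=> tH DN; have [->|DT] := eqVneq D setT.
  apply: big1 => C _; apply/eqP; rewrite eqb0; apply/negP => /children_proper.
  by rewrite properE subsetT andbF.
have [P PH DP] := parent_exists tH DN DT.
rewrite (bigD1 P) //= DP big1 // => C /andP[CH CP].
by apply/eqP; rewrite eqb0; apply: contra CP => DC; rewrite (parent_uniq tH CH PH DC DP).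
Qed.

Lemma card_nodes H : is_tree H -> #|nodes H| = #|H| + n.
Proof.
move=> tH; rewrite cardsU card_imset ?card_ord; last exact: set1_inj.
suff -> : H :&: [set [set x] | x : 'I_n] = set0 by rewrite cards0 subn0.
apply/setP => D; rewrite !inE; apply/negbTE/andP => -[DH /imsetP[x _ Dx]].
by have := tree_card tH DH; rewrite Dx cards1.
Qed.

Lemma sum_card_children H : is_tree H ->
  \sum_(C in H) #|children H C| = #|H| + n - 1.
Proof.
move=> tH; have card_ch C : #|children H C| = \sum_(D in nodes H) (D \in children H C).
  rewrite sum_nat_mem; apply: eq_card => D /=.
  by apply/idP/andP => [DC|[]//]; rewrite (children_nodes DC).
under eq_bigr do rewrite card_ch.
rewrite exchange_big /= (eq_bigr _ (fun D => sum_parents tH)) sum_nat_mem.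
rewrite -(card_nodes tH) (cardsD1 setT) (clade_nodes (tree_setT tH)) add1n subSS subn0.
by apply: eq_card => D; rewrite !inE andbC.
Qed.

Lemma card_tree H : is_tree H -> #|H| <= n - 1 ?= iff binary H.
Proof.
move=> tH; have ch2 C : C \in H -> 2 <= #|children H C| ?= iff (2 == #|children H C|).
  by move=> CH; apply/leqif_eq/card_children_ge2/(tree_card tH).
have [le eq] := @leqif_sum _ (mem H) _ (fun=> 2) _ ch2.
rewrite sum_nat_const sum_card_children // in le eq.
have -> : binary H = [forall (C | C \in H), 2 == #|children H C|].
  by apply: eq_forallb => C; rewrite eq_sym.
rewrite -eq; split; first lia.
by apply/eqP/eqP; lia.
Qed.

Lemma card_setU_trees (S1 S2 : {set {set 'I_n}}) : is_tree S1 -> is_tree S2 ->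
  #|S1 :|: S2| <= 2 * (n - 1) - 1
    ?= iff [&& binary S1, binary S2 & S1 :&: S2 == [set setT]].
Proof.
move=> t1 t2; have [le1 <-] := card_tree t1; have [le2 <-] := card_tree t2.
have root : [set setT] \subset S1 :&: S2 by rewrite sub1set inE !tree_setT.
have I0 : 0 < #|S1 :&: S2| by apply/card_gt0P; exists setT; rewrite inE !tree_setT.
have eqI : (S1 :&: S2 == [set setT]) = (#|S1 :&: S2| == 1).
  by rewrite eq_sym eqEcard root cards1 eqn_leq I0 andbT.
have IS1 : #|S1 :&: S2| <= #|S1| := subset_leq_card (subsetIl S1 S2).
have cardU : #|S1 :|: S2| = #|S1| + #|S2| - #|S1 :&: S2| := cardsU S1 S2.
rewrite eqI cardU; split; first lia.
by apply/eqP/and3P => [eqU|[/eqP eq1 /eqP eq2 /eqP eqI']]; first split; apply/eqP; lia.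
Qed.

End Counting.

Section Caterpillar.
Variables (n : nat) (tau : 'I_n -> 'I_n).
Hypothesis tau_inj : injective tau.

Definition prefix_clade k : {set 'I_n} := tau @: [set i : 'I_n | i < k].

Definition caterpillar : {set {set 'I_n}} := [set prefix_clade k.+2 | k : 'I_n.-1].

Lemma card_prefix_clade k : k <= n -> #|prefix_clade k| = k.
Proof.
move=> le_kn; rewrite card_imset //.
have -> : [set i : 'I_n | i < k] = [set widen_ord le_kn i | i : 'I_k].
  apply/setP => i; rewrite inE; apply/idP/imsetP => [lt_ik|[j _ ->]]; last exact: (ltn_ord j).
  by exists (Ordinal lt_ik); last apply: val_inj.
by rewrite card_imset ?card_ord // => i j /(congr1 val) /= /val_inj.
Qed.

Lemma mem_prefix_clade x k : (tau x \in prefix_clade k) = (x < k).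
Proof. by rewrite mem_imset // inE. Qed.

Lemma prefix_clade_subset j k : j <= k -> prefix_clade j \subset prefix_clade k.
Proof.
move=> le_jk; apply/subsetP => y /imsetP[x]; rewrite inE => lt_xj ->.
by rewrite mem_prefix_clade (leq_trans lt_xj le_jk).
Qed.

Lemma prefix_cladeT : prefix_clade n = setT.
Proof. by apply/eqP; rewrite eqEcard subsetT cardsT card_ord card_prefix_clade (leqnn n). Qed.

Lemma caterpillarP E :
  reflect (exists2 k, 2 <= k <= n & E = prefix_clade k) (E \in caterpillar).
Proof.
apply: (iffP imsetP) => [[k _ ->]|[k /andP[k2 kn] ->]].
  by exists k.+2 => //; have := ltn_ord k; lia.
have lt_k2 : k - 2 < n.-1 by lia.
by exists (Ordinal lt_k2) => //=; congr prefix_clade; lia.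
Qed.

Lemma caterpillar_tree : 2 <= n -> is_tree caterpillar.
Proof.
move=> n_ge2; apply: laminar_tree.
- by rewrite -prefix_cladeT; apply/caterpillarP; exists n; rewrite ?n_ge2 ?leqnn.
- by move=> _ /caterpillarP[k /andP[k2 kn] ->]; rewrite card_prefix_clade.
- move=> _ _ /caterpillarP[j _ ->] /caterpillarP[k _ ->].
  by case: (leqP j k) => [/prefix_clade_subset -> //|/ltnW/prefix_clade_subset ->]; rewrite orbT.
Qed.

Lemma card_caterpillar : #|caterpillar| = n - 1.
Proof.
rewrite card_imset ?card_ord; first lia.
move=> j k /(congr1 (fun E : {set 'I_n} => #|E|)).
by rewrite !card_prefix_clade; [case=> /val_inj | have := ltn_ord k; lia | have := ltn_ord j; lia].
Qed.

End Caterpillar.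

Lemma caterpillars_meet n : 2 <= n ->
  caterpillar id :&: caterpillar (@rev_ord n) = [set setT].
Proof.
move=> n2; have n0 : 0 < n by lia.
apply/setP => E; rewrite !inE; apply/andP/eqP => [[]|->].
  case/caterpillarP=> j /andP[j2 _] -> /caterpillarP[k /andP[_ kn] Ek].
  have : Ordinal n0 \in prefix_clade id j.
    by rewrite -[Ordinal n0]/(id (Ordinal n0)) (mem_prefix_clade (@inj_id _)) /= ltnW.
  rewrite Ek -[Ordinal n0]rev_ordK (mem_prefix_clade (@rev_ord_inj n)) /= => lt_n1k.
  by rewrite -(prefix_cladeT (@rev_ord_inj n)); congr prefix_clade; lia.
split; apply/caterpillarP; exists n; rewrite ?n2 ?leqnn //.
  by rewrite (prefix_cladeT (@inj_id _)).
by rewrite (prefix_cladeT (@rev_ord_inj n)).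
Qed.

Lemma card_setU_caterpillars n : (2 <= n)%N ->
  #|caterpillar id :|: caterpillar (@rev_ord n)| = (2 * (n - 1) - 1)%N.
Proof.
move=> n2; have [t1 t2] := (caterpillar_tree (@inj_id _) n2, caterpillar_tree (@rev_ord_inj n) n2).
apply/eqP; rewrite (card_setU_trees t1 t2) caterpillars_meet // eqxx andbT.
have [_ <-] := card_tree t1; have [_ <-] := card_tree t2.
by rewrite !card_caterpillar ?eqxx //; apply: rev_ord_inj.
Qed.

Local Open Scope ring_scope.

Lemma free_image (F : fieldType) (vT : vectType F) (T : finType) (U : {pred T})
    (f : T -> vT) :
  (forall c, \sum_(x in U) c x *: f x = 0 -> forall x, x \in U -> c x = 0) ->
  free (image f U).
Proof.
move=> indep; have -> : image f U = image_tuple f (mem U) by [].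
apply/freeP => k sum0 i.
pose c x := \sum_(j < #|U| | enum_val j == x) k j.
have cE j : c (enum_val j) = k j.
  by rewrite /c (eq_bigl (pred1 j)) ?big_pred1_eq // => j'; rewrite /= (inj_eq enum_val_inj).
rewrite -cE; apply: indep (enum_valP i); rewrite big_enum_val -[RHS]sum0.
by apply: eq_bigr => j _; rewrite cE (nth_image _ f).
Qed.

Lemma free_size_le (F : fieldType) (vT : vectType F) (X : seq vT) :
  free X -> (size X <= dim vT)%N.
Proof. by move=> /eqP <-; rewrite -dimvf dimvS ?subvf. Qed.

Section CladeVectors.
Variables (R : realType) (n : nat).
Implicit Types (H : {set {set 'I_n}}) (C D L X Y : {set 'I_n}) (p : upair n) (d : amb R n).

Definition upair_in p X := ((val p).1 \in X) && ((val p).2 \in X).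

Definition clade_vec X : amb R n := \row_j (upair_in (enum_val j) X)%:R.

Lemma dcoord_clade_vec X p : dcoord (clade_vec X) p = (upair_in p X)%:R.
Proof. by rewrite /dcoord mxE enum_rankK. Qed.

Lemma dcoord_inj d1 d2 : (forall p, dcoord d1 p = dcoord d2 p) -> d1 = d2.
Proof. by move=> eq12; apply/rowP => j; rewrite -[j]enum_valK; apply: eq12. Qed.

Lemma dcoord0 p : dcoord (0 : amb R n) p = 0.
Proof. by rewrite /dcoord mxE. Qed.

Lemma dcoordN d p : dcoord (- d) p = - dcoord d p.
Proof. by rewrite /dcoord mxE. Qed.

Lemma dcoordB d1 d2 p : dcoord (d1 - d2) p = dcoord d1 p - dcoord d2 p.
Proof. by rewrite /dcoord !mxE. Qed.

Lemma dcoordZ c d p : dcoord (c *: d) p = c * dcoord d p.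
Proof. by rewrite /dcoord mxE. Qed.

Lemma dcoord_sum (I : finType) (P : pred I) (F : I -> amb R n) p :
  dcoord (\sum_(i | P i) F i) p = \sum_(i | P i) dcoord (F i) p.
Proof. by rewrite /dcoord summxE. Qed.

Lemma upair_in_lca H L p D : lca H (val p).1 (val p).2 L -> D \in H ->
  upair_in p D = (L \subset D).
Proof.
case/and4P=> _ uL vL /forall_inP minL DH; apply/idP/idP => [|LD].
  exact: implyP (minL D DH).
by rewrite /upair_in !(subsetP LD).
Qed.

Lemma K0 H : K R H 0.
Proof. by exists (fun=> 0); split=> // p C _; rewrite dcoord0. Qed.

Lemma K_opp_clade_vec H C : C \in H -> K R H (- clade_vec C).
Proof.
move=> CH; exists (fun E : {set 'I_n} => if E \subset C then -1 else 0); split.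
  move=> E F _ _ EF; have [FC|_] := boolP (F \subset C).
    by rewrite (subset_trans (proper_sub EF) FC).
  by case: ifP; rewrite ?lerN10.
move=> p E pE; rewrite dcoordN dcoord_clade_vec (upair_in_lca pE CH).
by case: ifP; rewrite ?oppr0.
Qed.

Definition lca_vec H C := clade_vec C - \sum_(D in H | D \in children H C) clade_vec D.

Lemma sum_children_supset H L C : is_tree H -> L \in H ->
  (\sum_(D in H | D \in children H C) (L \subset D))%N = nat_of_bool (L \proper C).
Proof.
move=> tH LH; have [LC|LC] := boolP (L \proper C); last first.
  apply: big1 => D /andP[_ DC]; apply/eqP; rewrite eqb0.
  by apply: contra LC => LD; apply: sub_proper_trans LD (children_proper DC).
have [D DC LD] := child_exists (clade_nodes LH) LC.
have DH : D \in H.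
  exact: nodes_clade (children_nodes DC) (leq_trans (tree_card tH LH) (subset_leq_card LD)).
have [x xL] : exists x, x \in L by apply: nodes_n0 tH (clade_nodes LH).
rewrite (bigD1 D) ?DH ?DC //= LD big1 // => D' /andP[/andP[_ D'C] D'D].
apply/eqP; rewrite eqb0; apply: contra D'D => LD'.
by rewrite (child_uniq tH D'C DC (subsetP LD' x xL) (subsetP LD x xL)).
Qed.

Lemma dcoord_lca_vec H C L p : is_tree H -> C \in H ->
  lca H (val p).1 (val p).2 L -> dcoord (lca_vec H C) p = (C == L)%:R.
Proof.
move=> tH CH pL; have /and4P[LH _ _ _] := pL.
rewrite dcoordB dcoord_sum dcoord_clade_vec (upair_in_lca pL CH).
under eq_bigr => D /andP[DH _] do rewrite dcoord_clade_vec (upair_in_lca pL DH).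
rewrite -natr_sum sum_children_supset // properEneq eq_sym.
by case: eqP => [->|_]; rewrite ?subxx ?subrr ?subr0.
Qed.

Lemma K_sub_span H d : is_tree H -> K R H d -> d \in <<image clade_vec H>>%VS.
Proof.
move=> tH [w [_ dw]].
have -> : d = \sum_(C in H) w C *: lca_vec H C.
  apply: dcoord_inj => p; have [L pL] := lca_exists (val p).1 (val p).2 tH.
  have /and4P[LH _ _ _] := pL.
  rewrite (dw p L pL) dcoord_sum (bigD1 L) //= dcoordZ (dcoord_lca_vec tH LH pL) eqxx mulr1.
  rewrite big1 ?addr0 // => C /andP[CH CL].
  by rewrite dcoordZ (dcoord_lca_vec tH CH pL) (negbTE CL) mulr0.
apply: memv_suml => C CH; apply/memvZ/memvB; first exact/memv_span/image_f.
by apply: memv_suml => D /andP[DH _]; apply/memv_span/image_f.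
Qed.

Lemma upair_of u v : u != v -> exists p, forall X, upair_in p X = (u \in X) && (v \in X).
Proof.
move=> uv; have [ltuv|ltvu|/val_inj eq_uv] := ltngtP u v; last by rewrite eq_uv eqxx in uv.
  by exists (exist (fun q : 'I_n * 'I_n => (q.1 < q.2)%N) (u, v) ltuv).
by exists (exist (fun q : 'I_n * 'I_n => (q.1 < q.2)%N) (v, u) ltvu) => X; rewrite /upair_in andbC.
Qed.

(* A nonzero coefficient on a clade X of maximal size shows up at the coordinate
   of a separating pair of X, where only clades containing X contribute. *)
Lemma clade_vec_indep H1 H2 (c : {set 'I_n} -> R) : is_tree H1 -> is_tree H2 ->
  \sum_(C in H1 :|: H2) c C *: clade_vec C = 0 -> forall C, C \in H1 :|: H2 -> c C = 0.
Proof.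
move=> t1 t2 sum0 C CU; apply/eqP; apply: contraT => cC.
pose Q := [set X in H1 :|: H2 | c X != 0].
have CQ : C \in Q by rewrite inE CU.
have [X] := @arg_maxnP _ C (mem Q) (fun X => #|X|) CQ.
rewrite /= inE => /andP[XU cX] maxX.
have X2 : (2 <= #|X|)%N by case/setUP: XU => /tree_card; apply.
have [u [v [uX vX uv sepX]]] := separating_pair t1 t2 X2.
have [p pE] := upair_of uv.
have := congr1 (dcoord^~ p) sum0; rewrite dcoord_sum dcoord0 (bigD1 X) //= big1.
  by rewrite dcoordZ dcoord_clade_vec pE uX vX mulr1 addr0 => cX0; rewrite cX0 eqxx in cX.
move=> Y /andP[YU YX]; rewrite dcoordZ dcoord_clade_vec pE.
have [/andP[uY vY]|] := boolP ((u \in Y) && (v \in Y)); last by rewrite mulr0.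
have XY : X \proper Y by rewrite properEneq eq_sym YX sepX.
apply/eqP; rewrite mulr1; apply: contraT => cY.
have := maxX Y; rewrite inE YU cY => /(_ isT).
by rewrite leqNgt proper_card.
Qed.

End CladeVectors.

Section Dimension.
Variable R : realType.

Lemma setdim_ge N (S : 'rV[R]_N -> Prop) s :
  (forall x, x \in s -> S x) -> free s -> (size s <= setdim S)%N.
Proof.
move=> sS free_s; have size_s : (size s < N.+1)%N.
  by have := free_size_le free_s; rewrite dim_matrix mul1r ltnS.
apply: (leq_bigmax_cond (Ordinal size_s) (F := fun k => val k)).
by apply/asboolP; exists s.
Qed.

Lemma setdim_le N (S : 'rV[R]_N -> Prop) m :
  (forall s, (forall x, x \in s -> S x) -> free s -> (size s <= m)%N) ->
  (setdim S <= m)%N.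
Proof. by move=> le_m; apply/bigmax_leqP => k /asboolP[s [<- sS free_s]]; apply: le_m. Qed.

Lemma setdim_msum_K n (S1 S2 : {set {set 'I_n}}) : is_tree S1 -> is_tree S2 ->
  setdim (msum (K R S1) (K R S2)) = #|S1 :|: S2|.
Proof.
move=> t1 t2; apply/eqP; rewrite eqn_leq; apply/andP; split.
  apply: setdim_le => s sK /eqP <-.
  have span_U (S : {set {set 'I_n}}) : S \subset S1 :|: S2 ->
      (<<image (@clade_vec R n) S>> <= <<image (@clade_vec R n) (S1 :|: S2)>>)%VS.
    move=> SU; apply/span_subvP => x /imageP[C CS ->].
    by apply/memv_span/image_f; apply: (subsetP SU).
  have sU : (<<s>> <= <<image (@clade_vec R n) (S1 :|: S2)>>)%VS.
    apply/span_subvP => x /sK[a [b [Ka Kb ->]]]; apply: memvD.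
      by move/subvP: (span_U S1 (subsetUl _ _)); apply; apply: K_sub_span t1 Ka.
    by move/subvP: (span_U S2 (subsetUr _ _)); apply; apply: K_sub_span t2 Kb.
  by apply: leq_trans (dimvS sU) _; rewrite (leq_trans (dim_span _)) ?size_image.
rewrite -(size_image (fun C => - clade_vec R C)); apply: setdim_ge.
  move=> x /imageP[C]; rewrite inE => /orP[CS|CS] ->.
    by exists (- clade_vec R C), 0; split; rewrite ?addr0 //; [apply: K_opp_clade_vec | apply: K0].
  by exists 0, (- clade_vec R C); split; rewrite ?add0r //; [apply: K0 | apply: K_opp_clade_vec].
apply: free_image => c sum0; apply: (clade_vec_indep t1 t2).
rewrite -[RHS]oppr0 -[in RHS]sum0 -sumrN.
by apply: eq_bigr => D _; rewrite scalerN opprK.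
Qed.

End Dimension.

Theorem corollary3p8 (R : realType) (n : nat) (hn : (2 <= n)%N)
  (T1 T2 : {set {set 'I_n}}) :
  is_tree T1 -> is_tree T2 ->
  ((forall S1 S2 : {set {set 'I_n}}, is_tree S1 -> is_tree S2 ->
      (setdim (msum (K R S1) (K R S2)) <= setdim (msum (K R T1) (K R T2)))%N)
   <->
   [/\ binary T1, binary T2 & T1 :&: T2 = [set [set: 'I_n]]]).
Proof.
move=> t1 t2; have [leT eqT] := card_setU_trees t1 t2.
rewrite setdim_msum_K //; split=> [maxT | [b1 b2 meetT] S1 S2 s1 s2].
  have c1 := caterpillar_tree (@inj_id _) hn; have c2 := caterpillar_tree (@rev_ord_inj n) hn.
  have := maxT _ _ c1 c2; rewrite setdim_msum_K // card_setU_caterpillars // => geT.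
  have /and3P[b1 b2 /eqP meetT] : [&& binary T1, binary T2 & T1 :&: T2 == [set setT]].
    by rewrite -eqT eqn_leq leT.
  by split.
rewrite setdim_msum_K //; have [leS _] := card_setU_trees s1 s2.
by have /eqP -> : #|T1 :|: T2| == (2 * (n - 1) - 1)%N by rewrite eqT b1 b2 meetT eqxx.
Qed.
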